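(* Let $\phi:Z\to[-\infty,+\infty]$ be proper and closed, and suppose Assumptions (A1) and (A2) hold for some $\lambda\in\mathbb R$. Then for every $\tau\in(0,1/\lambda^-)$ the resolvent $J_\tau:\overline{D\phi}\to D\phi$ is continuous.
   Context: $(X,\mathsf d_X)$, $(Y,\mathsf d_Y)$ complete metric spaces; $Z=X\times Y$ with $\mathsf d_Z=(\mathsf d_X^2+\mathsf d_Y^2)^{1/2}$. $D_X\phi=\{x:\phi(x,y)<+\infty\ \forall y\}$, $D_Y\phi=\{y:\phi(x,y)>-\infty\ \forall x\}$, $D\phi=D_X\phi\times D_Y\phi$; proper: $D\phi\ne\emptyset$; closed: for $x\in D_X\phi$, $y\mapsto\phi(x,y)$ upper semicontinuous, for $y\in D_Y\phi$, $x\mapsto\phi(x,y)$ lower semicontinuous. (A1): $\phi=+\infty$ on $(X\setminus D_X\phi)\times D_Y\phi$, $\phi=-\infty$ on $D_X\phi\times(Y\setminus D_Y\phi)$. $\lambda^-=\max\{-\lambda,0\}$, $1/\lambda^-:=+\infty$ if $\lambda^-=0$. $\Phi_\tau(x,y;x',y')=\phi(x',y')+\frac1{2\tau}(\mathsf d_X^2(x',x)-\mathsf d_Y^2(y',y))$. $f$ on $Z$ is $\mu$-convex-concave along curves $\gamma,\sigma$ if for all $t\in[0,1]$: $f(\gamma_t,y)\le(1-t)f(\gamma_0,y)+tf(\gamma_1,y)-\frac\mu2t(1-t)\mathsf d_X^2(\gamma_0,\gamma_1)$ for all $y$ and $f(x,\sigma_t)\ge(1-t)f(x,\sigma_0)+tf(x,\sigma_1)+\frac\mu2t(1-t)\mathsf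 d_Y^2(\sigma_0,\sigma_1)$ for all $x$. (A2) for $\lambda$: for every $(x,y)\in Z$, $(x_0,y_0),(x_1,y_1)\in D\phi$ there are continuous curves $\gamma$ from $x_0$ to $x_1$, $\sigma$ from $y_0$ to $y_1$ such that for all $\tau\in(0,1/\lambda^-)$, $(x',y')\mapsto\Phi_\tau(x,y;x',y')$ is $(\tau^{-1}+\lambda)$-convex-concave along them. A saddle point of $g:Z\to[-\infty,\infty]$ is $(x^*,y^* )$ with $g(x^*,y)\le g(x^*,y^* )\le g(x,y^* )$ for all $(x,y)$. Resolvent: for $z\in Z$ and $\tau\in(0,1/\lambda^-)$, $J_\tau z$ is the saddle point of $z'\mapsto\Phi_\tau(z;z')$; under the stated assumptions it exists, is unique and lies in $D\phi$. *)

From HB Require Import structures.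
From mathcomp Require Import all_boot all_order all_algebra.
From mathcomp Require Import reals constructive_ereal.
Set Implicit Arguments. Unset Strict Implicit. Unset Printing Implicit Defensive.
Import Order.TTheory GRing.Theory Num.Theory.
Local Open Scope ring_scope.
Local Open Scope ereal_scope.

Section Defs.
Context {R : realType}.

Definition is_metric {X : Type} (d : X -> X -> R) : Prop :=
  (forall x y, (0 <= d x y)%R) /\
  (forall x y, d x y = 0%R <-> x = y) /\
  (forall x y, d x y = d y x) /\
  (forall x y z, (d x z <= d x y + d y z)%R).

Definition complete_metric {X : Type} (d : X -> X -> R) : Prop :=
  forall u : nat -> X,
    (forall e : R, (0 < e)%R -> exists N, forall m n, (N <= m)%N -> (N <= n)%N ->
        (d (u m) (u n) < e)%R) ->
    exists l, forall e : R, (0 < e)%R -> exists N, forall n, (N <= n)%N ->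
        (d (u n) l < e)%R.

Definition dZ {X Y : Type} (dX : X -> X -> R) (dY : Y -> Y -> R)
  (z z' : X * Y) : R :=
  Num.sqrt (dX z.1 z'.1 ^+ 2 + dY z.2 z'.2 ^+ 2)%R.

Definition DX {X Y : Type} (phi : X -> Y -> \bar R) (x : X) : Prop :=
  forall y, phi x y < +oo.
Definition DY {X Y : Type} (phi : X -> Y -> \bar R) (y : Y) : Prop :=
  forall x, -oo < phi x y.
Definition Dphi {X Y : Type} (phi : X -> Y -> \bar R) (z : X * Y) : Prop :=
  DX phi z.1 /\ DY phi z.2.

Definition proper_sf {X Y : Type} (phi : X -> Y -> \bar R) : Prop :=
  exists z, Dphi phi z.

Definition lsc {X : Type} (d : X -> X -> R) (f : X -> \bar R) : Prop :=
  forall x (a : R), a%:E < f x ->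
    exists del : R, (0 < del)%R /\ forall x', (d x x' < del)%R -> a%:E < f x'.
Definition usc {X : Type} (d : X -> X -> R) (f : X -> \bar R) : Prop :=
  forall x (a : R), f x < a%:E ->
    exists del : R, (0 < del)%R /\ forall x', (d x x' < del)%R -> f x' < a%:E.

Definition closed_sf {X Y : Type} (dX : X -> X -> R) (dY : Y -> Y -> R)
  (phi : X -> Y -> \bar R) : Prop :=
  (forall x, DX phi x -> usc dY (fun y => phi x y)) /\
  (forall y, DY phi y -> lsc dX (fun x => phi x y)).

Definition A1 {X Y : Type} (phi : X -> Y -> \bar R) : Prop :=
  (forall x y, ~ DX phi x -> DY phi y -> phi x y = +oo) /\
  (forall x y, DX phi x -> ~ DY phi y -> phi x y = -oo).

Definition lam_minus (lam : R) : R := Num.max (- lam)%R 0%R.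

(* tau in (0, 1/lambda^-), with 1/lambda^- = +oo when lambda^- = 0 *)
Definition tau_adm (lam tau : R) : Prop :=
  (0 < tau)%R /\ ((0 < lam_minus lam)%R -> (tau < 1 / lam_minus lam)%R).

Definition Phi {X Y : Type} (dX : X -> X -> R) (dY : Y -> Y -> R)
  (phi : X -> Y -> \bar R) (tau : R) (z : X * Y) (x' : X) (y' : Y) : \bar R :=
  phi x' y' + ((dX x' z.1 ^+ 2 - dY y' z.2 ^+ 2) / (2 * tau))%R%:E.

Definition curve_cont {X : Type} (d : X -> X -> R) (g : R -> X) : Prop :=
  forall t, (0 <= t <= 1)%R -> forall e : R, (0 < e)%R ->
    exists del : R, (0 < del)%R /\ forall s, (0 <= s <= 1)%R ->
      (`|s - t|%R < del)%R -> (d (g t) (g s) < e)%R.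

Definition cvx_ccv_along {X Y : Type} (dX : X -> X -> R) (dY : Y -> Y -> R)
  (f : X -> Y -> \bar R) (mu : R) (gam : R -> X) (sig : R -> Y) : Prop :=
  forall t, (0 <= t <= 1)%R ->
    (forall y, f (gam t) y <= (1 - t)%R%:E * f (gam 0%R) y + t%:E * f (gam 1%R) y
        - (mu / 2 * t * (1 - t) * dX (gam 0%R) (gam 1%R) ^+ 2)%R%:E) /\
    (forall x, f x (sig t) >= (1 - t)%R%:E * f x (sig 0%R) + t%:E * f x (sig 1%R)
        + (mu / 2 * t * (1 - t) * dY (sig 0%R) (sig 1%R) ^+ 2)%R%:E).

Definition A2 {X Y : Type} (dX : X -> X -> R) (dY : Y -> Y -> R)
  (phi : X -> Y -> \bar R) (lam : R) : Prop :=
  forall (z : X * Y) (x0 x1 : X) (y0 y1 : Y),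
    Dphi phi (x0, y0) -> Dphi phi (x1, y1) ->
    exists (gam : R -> X) (sig : R -> Y),
      curve_cont dX gam /\ gam 0%R = x0 /\ gam 1%R = x1 /\
      curve_cont dY sig /\ sig 0%R = y0 /\ sig 1%R = y1 /\
      forall tau, tau_adm lam tau ->
        cvx_ccv_along dX dY (Phi dX dY phi tau z) (tau^-1 + lam)%R gam sig.

Definition saddle_point {X Y : Type} (g : X -> Y -> \bar R) (z : X * Y) : Prop :=
  forall x y, g z.1 y <= g z.1 z.2 /\ g z.1 z.2 <= g x z.2.

Definition closureZ {X Y : Type} (dX : X -> X -> R) (dY : Y -> Y -> R)
  (S : X * Y -> Prop) (z : X * Y) : Prop :=
  forall e : R, (0 < e)%R -> exists s, S s /\ (dZ dX dY z s < e)%R.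

Definition cont_on {X Y : Type} (dX : X -> X -> R) (dY : Y -> Y -> R)
  (A : X * Y -> Prop) (F : X * Y -> X * Y) : Prop :=
  forall z, A z -> forall e : R, (0 < e)%R ->
    exists del : R, (0 < del)%R /\ forall z', A z' ->
      (dZ dX dY z z' < del)%R -> (dZ dX dY (F z) (F z') < e)%R.

End Defs.

(* Write g := Phi_tau(z; .) and M := 1 + tau lam > 0. At a saddle point w = (a, b) of g,
   the (tau^-1 + lam)-convexity of g along a curve from a to any a' (and the concavity
   along a curve from b to any b') forces the quadratic gaps
   (M / 2 tau) d(a, a')^2 <= g(a', b) - g(a, b) and (M / 2 tau) d(b, b')^2 <= g(a, b) - g(a, b').
   Adding the four gaps obtained from two saddle points w1 = J z1 and w2 = J z2, the
   values of phi cancel and only differences of squared distances to z1 and z2 remain,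
   each of size O(d(z1, z2)); this yields M d(w1, w2)^2 <= 2 d(z1, z2) (K + 1 + d(w1, w2))
   with K depending only on z1 and J z1, hence continuity of J at z1. *)
From mathcomp Require Import all_boot all_order all_algebra.
From mathcomp Require Import reals constructive_ereal.
From mathcomp Require Import ring lra.
From Stdlib Require Import Classical.
Set Implicit Arguments.
Unset Strict Implicit.
Unset Printing Implicit Defensive.
Import Order.TTheory GRing.Theory Num.Theory.
Local Open Scope ring_scope.

Section RealInequalities.
Variable R : realFieldType.

Lemma ler_of_forall_mul1B (A B : R) :
  (forall t, 0 < t <= 1 -> B * (1 - t) <= A) -> B <= A.
Proof.
move=> h; have A_ge0 : 0 <= A by have := h 1; rewrite ltr01 lexx subrr mulr0; apply.
have [//|AltB] := lerP B A.
have t_gt0 : 0 < (B - A) / (2 * B) by apply: divr_gt0; lra.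
have t_le1 : (B - A) / (2 * B) <= 1 by rewrite ler_pdivrMr; lra.
have := h _ (andb_true_intro (conj t_gt0 t_le1)).
have -> : B * (1 - (B - A) / (2 * B)) = (A + B) / 2 by field; lra.
lra.
Qed.

(* c0 is the value at the minimiser and c1 the value at the other end of a segment
   along which the function is k-strongly convex (k already halved). *)
Lemma convex_min_gap (k c0 c1 : R) :
  (forall t, 0 < t <= 1 -> c0 <= (1 - t) * c0 + t * c1 - k * t * (1 - t)) ->
  k <= c1 - c0.
Proof.
move=> h; apply: ler_of_forall_mul1B => t /[dup] /andP[t_gt0 _] /h ht.
have : 0 <= t * ((c1 - c0) - k * (1 - t)) by nra.
by rewrite pmulr_rge0 // subr_ge0.
Qed.

Lemma sqrB_le (a b r c : R) : 0 <= a -> 0 <= b -> 0 <= r -> r <= 1 ->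
  a <= b + r -> b <= a + r -> a <= c \/ b <= c -> a ^+ 2 - b ^+ 2 <= r * (2 * c + 1).
Proof. by move=> ? ? ? ? ? ? [?|?]; nra. Qed.

Lemma lt_of_sqr_le_linear (M K D d e : R) : 0 < M -> 0 <= K -> 0 <= D -> 0 <= d -> 0 < e ->
  M * D ^+ 2 <= 2 * d * (K + 1 + D) -> 2 * d <= M * e / 2 ->
  2 * d * (K + 1) < M * e ^+ 2 / 2 -> D < e.
Proof.
move=> *; have [//|eleD] := ltrP D e.
have : M * e * D <= M * D ^+ 2 by rewrite expr2 mulrA ler_wpM2r // ler_wpM2l // ltW.
have : 2 * d * D <= M * e / 2 * D by rewrite ler_wpM2r.
nra.
Qed.

End RealInequalities.

Section SqrtSum.
Variable R : rcfType.

Lemma ler_sqrt_sqrDl (a b : R) : 0 <= a -> a <= Num.sqrt (a ^+ 2 + b ^+ 2).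
Proof.
move=> a_ge0; rewrite -{1}(ger0_norm a_ge0) -sqrtr_sqr.
by apply: ler_wsqrtr; rewrite lerDl sqr_ge0.
Qed.

Lemma ler_sqrt_sqrDr (a b : R) : 0 <= b -> b <= Num.sqrt (a ^+ 2 + b ^+ 2).
Proof. by rewrite addrC; apply: ler_sqrt_sqrDl. Qed.

End SqrtSum.

Section Metric.
Variables (R : realType) (T : Type) (d : T -> T -> R).
Hypothesis d_metric : is_metric d.

Lemma sqr_distB_le p u v r c : d u v <= r -> r <= 1 -> d p u <= c \/ d p v <= c ->
  d p u ^+ 2 - d p v ^+ 2 <= r * (2 * c + 1).
Proof.
have [d_ge0 [_ [dC d_tri]]] := d_metric.
move=> duv_r r_le1; apply: sqrB_le => //.
- exact: le_trans (d_ge0 u v) duv_r.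
- by apply: le_trans (d_tri p v u) _; rewrite lerD2l dC.
- by apply: le_trans (d_tri p u v) _; rewrite lerD2l.
Qed.

End Metric.

Section ProductMetric.
Variables (R : realType) (X Y : Type) (dX : X -> X -> R) (dY : Y -> Y -> R).
Hypotheses (dX_metric : is_metric dX) (dY_metric : is_metric dY).

Lemma dZ_ge0 z z' : 0 <= dZ dX dY z z'.
Proof. exact: sqrtr_ge0. Qed.

Lemma dZ_sqr z z' : dZ dX dY z z' ^+ 2 = dX z.1 z'.1 ^+ 2 + dY z.2 z'.2 ^+ 2.
Proof. by rewrite sqr_sqrtr // addr_ge0 // sqr_ge0. Qed.

Lemma dX_le_dZ z z' : dX z.1 z'.1 <= dZ dX dY z z'.
Proof. by apply: ler_sqrt_sqrDl; case: dX_metric. Qed.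

Lemma dY_le_dZ z z' : dY z.2 z'.2 <= dZ dX dY z z'.
Proof. by apply: ler_sqrt_sqrDr; case: dY_metric. Qed.

End ProductMetric.

Section Resolvent.
Variables (R : realType) (X Y : Type) (dX : X -> X -> R) (dY : Y -> Y -> R).
Variables (phi : X -> Y -> \bar R) (lam tau : R).
Hypotheses (phi_proper : proper_sf phi) (phi_A1 : A1 phi) (phi_A2 : A2 dX dY phi lam).
Hypothesis tau_admissible : tau_adm lam tau.
Hypotheses (dX_metric : is_metric dX) (dY_metric : is_metric dY).

Local Notation g z := (Phi dX dY phi tau z).

Definition penalty (z : X * Y) x y : R := dX x z.1 ^+ 2 - dY y z.2 ^+ 2.

Definition PhiR z x y : R := fine (phi x y) + penalty z x y / (2 * tau).

Lemma PhiE z x y : DX phi x -> DY phi y -> g z x y = (PhiR z x y)%:E.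
Proof. by move=> /(_ y) + /(_ x); rewrite /Phi /PhiR; case: (phi x y). Qed.

Lemma Phi_lty z x y : (phi x y < +oo)%E -> (g z x y < +oo)%E.
Proof. by rewrite /Phi; case: (phi x y) => [r||] //= _; exact: ltry. Qed.

Lemma Phi_gtNy z x y : (-oo < phi x y)%E -> (-oo < g z x y)%E.
Proof. by rewrite /Phi; case: (phi x y) => [r||] //= _; exact: ltNyr. Qed.

Lemma Phi_pinfty z x y : phi x y = +oo%E -> g z x y = +oo%E.
Proof. by rewrite /Phi => ->. Qed.

Lemma Phi_ninfty z x y : phi x y = -oo%E -> g z x y = -oo%E.
Proof. by rewrite /Phi => ->. Qed.

(* Saddle values are finite: compare with a point (x0, y0) of D phi, then use (A1). *)
Lemma saddle_point_Dphi z w : saddle_point (g z) w -> Dphi phi w.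
Proof.
case: w => a b saddle; have [[x0 y0] [/= x0_DX y0_DY]] := phi_proper.
have [A1X A1Y] := phi_A1.
have gab_lty : (g z a b < +oo)%E.
  exact: le_lt_trans (saddle x0 y0).2 (Phi_lty z (x0_DX b)).
have gab_gtNy : (-oo < g z a b)%E.
  exact: lt_le_trans (Phi_gtNy z (y0_DY a)) (saddle x0 y0).1.
split => /=; apply: NNPP => notD.
- have := (saddle x0 y0).1; rewrite /= (Phi_pinfty z (A1X _ _ notD y0_DY)) leye_eq.
  by move=> /eqP gab_y; rewrite gab_y in gab_lty.
- have := (saddle x0 y0).2; rewrite /= (Phi_ninfty z (A1Y _ _ x0_DX notD)) leeNy_eq.
  by move=> /eqP gab_Ny; rewrite gab_Ny in gab_gtNy.
Qed.

Lemma saddle_gapX z a b a' : saddle_point (g z) (a, b) -> DX phi a' ->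
  (tau^-1 + lam) / 2 * dX a a' ^+ 2 <= PhiR z a' b - PhiR z a b.
Proof.
move=> saddle a'_DX; have [a_DX b_DY] := saddle_point_Dphi saddle.
have [gam [sig [_ [gam0 [gam1 [_ [_ [_ cvx]]]]]]]] :=
  @phi_A2 z a a' b b (conj a_DX b_DY) (conj a'_DX b_DY).
apply: convex_min_gap => t /andP[t_gt0 t_le1].
have [cvxX _] := cvx tau tau_admissible t (andb_true_intro (conj (ltW t_gt0) t_le1)).
have := le_trans (saddle (gam t) b).2 (cvxX b).
rewrite /= gam0 gam1 !PhiE // -!EFinM -!EFinD lee_fin.
lra.
Qed.

Lemma saddle_gapY z a b b' : saddle_point (g z) (a, b) -> DY phi b' ->
  (tau^-1 + lam) / 2 * dY b b' ^+ 2 <= PhiR z a b - PhiR z a b'.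
Proof.
move=> saddle b'_DY; have [a_DX b_DY] := saddle_point_Dphi saddle.
have [gam [sig [_ [_ [_ [_ [sig0 [sig1 cvx]]]]]]]] :=
  @phi_A2 z a a b b' (conj a_DX b_DY) (conj a_DX b'_DY).
have -> : PhiR z a b - PhiR z a b' = - PhiR z a b' - - PhiR z a b by ring.
apply: convex_min_gap => t /andP[t_gt0 t_le1].
have [_ ccvY] := cvx tau tau_admissible t (andb_true_intro (conj (ltW t_gt0) t_le1)).
have := le_trans (ccvY a) (saddle a (sig t)).1.
rewrite /= sig0 sig1 !PhiE // -!EFinM -!EFinD lee_fin.
lra.
Qed.

Lemma tau_adm_1DM_gt0 : 0 < 1 + tau * lam.
Proof.
have [tau_gt0 tau_lt] := tau_admissible.
have [lam_ge0|lam_lt0] := lerP 0 lam; first by have := mulr_ge0 (ltW tau_gt0) lam_ge0; lra.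
have lamN : lam_minus lam = - lam by rewrite /lam_minus max_l // ltW // oppr_gt0.
move: tau_lt; rewrite lamN oppr_gt0 lam_lt0 => /(_ erefl).
by rewrite ltr_pdivlMr ?oppr_gt0 //; lra.
Qed.

(* Summing the four quadratic gaps of two saddle points, all values of phi cancel. *)
Lemma saddle_points_sqr_dist z1 z2 a1 b1 a2 b2 :
  saddle_point (g z1) (a1, b1) -> saddle_point (g z2) (a2, b2) ->
  (1 + tau * lam) * dZ dX dY (a1, b1) (a2, b2) ^+ 2 <=
  (penalty z1 a2 b1 - penalty z1 a1 b2 + penalty z2 a1 b2 - penalty z2 a2 b1) / 2.
Proof.
move=> saddle1 saddle2.
have [a1_DX b1_DY] := saddle_point_Dphi saddle1.
have [a2_DX b2_DY] := saddle_point_Dphi saddle2.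
have := saddle_gapX saddle1 a2_DX; have := saddle_gapY saddle1 b2_DY.
have := saddle_gapX saddle2 a1_DX; have := saddle_gapY saddle2 b1_DY.
have [_ [_ [dXC _]]] := dX_metric; have [_ [_ [dYC _]]] := dY_metric.
have tau_gt0 : 0 < tau by case: tau_admissible.
rewrite dZ_sqr /PhiR /= (dXC a2) (dYC b2).
set Q := (penalty _ _ _ - _ + _ - _); set S := (dX a1 a2 ^+ 2 + _).
move=> gapY2 gapX2 gapY1 gapX1.
have gap_sum : (tau^-1 + lam) * S <= Q / (2 * tau) by rewrite /Q /S; lra.
have -> : (1 + tau * lam) * S = tau * ((tau^-1 + lam) * S) by field; lra.
have -> : Q / 2 = tau * (Q / (2 * tau)) by field; lra.
by rewrite ler_wpM2l // ltW.
Qed.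

Lemma saddle_points_dist_estimate z1 z2 a1 b1 a2 b2 :
  saddle_point (g z1) (a1, b1) -> saddle_point (g z2) (a2, b2) ->
  dZ dX dY z1 z2 <= 1 ->
  (1 + tau * lam) * dZ dX dY (a1, b1) (a2, b2) ^+ 2 <=
  2 * dZ dX dY z1 z2 * (dX a1 z1.1 + dY b1 z1.2 + 1 + dZ dX dY (a1, b1) (a2, b2)).
Proof.
case: z1 z2 => [x1 y1] [x2 y2] saddle1 saddle2 d_le1.
apply: le_trans (saddle_points_sqr_dist saddle1 saddle2) _.
have [_ [_ [dXC dX_tri]]] := dX_metric; have [_ [_ [dYC dY_tri]]] := dY_metric.
set d := dZ _ _ _ _ in d_le1 *; set D := dZ _ _ (a1, b1) _.
have dx12 : dX x1 x2 <= d := dX_le_dZ dY dX_metric (x1, y1) (x2, y2).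
have dy12 : dY y1 y2 <= d := dY_le_dZ dX dY_metric (x1, y1) (x2, y2).
have dx21 : dX x2 x1 <= d by rewrite dXC.
have dy21 : dY y2 y1 <= d by rewrite dYC.
have a2x1 : dX a2 x1 <= D + dX a1 x1.
  apply: le_trans (dX_tri a2 a1 x1) _; rewrite lerD2r dXC.
  exact: (dX_le_dZ dY dX_metric (a1, b1) (a2, b2)).
have b2y1 : dY b2 y1 <= D + dY b1 y1.
  apply: le_trans (dY_tri b2 b1 y1) _; rewrite lerD2r dYC.
  exact: (dY_le_dZ dX dY_metric (a1, b1) (a2, b2)).
have := sqr_distB_le dX_metric dx12 d_le1 (or_introl a2x1).
have := sqr_distB_le dX_metric dx21 d_le1 (or_intror (lexx (dX a1 x1))).
have := sqr_distB_le dY_metric dy21 d_le1 (or_intror (lexx (dY b1 y1))).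
have := sqr_distB_le dY_metric dy12 d_le1 (or_introl b2y1).
rewrite /penalty /=; lra.
Qed.

End Resolvent.

Theorem mainTheorem9 (R : realType) (X Y : Type)
  (dX : X -> X -> R) (dY : Y -> Y -> R) (phi : X -> Y -> \bar R) (lam : R) :
  is_metric dX -> complete_metric dX ->
  is_metric dY -> complete_metric dY ->
  proper_sf phi -> closed_sf dX dY phi ->
  A1 phi -> A2 dX dY phi lam ->
  forall tau : R, tau_adm lam tau ->
  forall J : X * Y -> X * Y,
    (forall z, closureZ dX dY (Dphi phi) z ->
       saddle_point (Phi dX dY phi tau z) (J z)) ->
    cont_on dX dY (closureZ dX dY (Dphi phi)) J.
Proof.
move=> dX_metric _ dY_metric _ phi_proper _ phi_A1 phi_A2 tau tau_admissible J J_saddle.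
move=> z1 z1_cl e e_gt0.
have := tau_adm_1DM_gt0 tau_admissible; set M := 1 + tau * lam => M_gt0.
have := J_saddle z1 z1_cl; case: (J z1) => a1 b1 saddle1.
set K := dX a1 z1.1 + dY b1 z1.2.
have K_ge0 : 0 <= K by rewrite addr_ge0 //; [case: dX_metric | case: dY_metric].
exists (Num.min 1 (Num.min (M * e / 4) (M * e ^+ 2 / (4 * (K + 1))))).
split; first by rewrite !lt_min ltr01 /= !divr_gt0 ?mulr_gt0 ?exprn_gt0 //; lra.
move=> z2 z2_cl; rewrite !lt_min => /and3P[d_lt1 d_lt2 d_lt3].
have := J_saddle z2 z2_cl; case: (J z2) => a2 b2 saddle2.
have estimate := saddle_points_dist_estimate phi_proper phi_A1 phi_A2 tau_admissible
  dX_metric dY_metric saddle1 saddle2 (ltW d_lt1).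
rewrite -/M -/K in estimate.
apply: (lt_of_sqr_le_linear M_gt0 K_ge0 _ _ e_gt0 estimate); try exact: dZ_ge0; first lra.
by move: d_lt3; rewrite ltr_pdivlMr; lra.
Qed.
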